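(* Let $\mathcal B$ be a connected building set on $[n+1]$ whose nested set complex $K_{\mathcal B}$ is a flag complex. Then for every subset $I\subseteq[n+1]$ of even cardinality, the complex $(K_{\mathcal B})_I$ is homotopy equivalent to $K^{\mathrm{odd}}_{\mathcal B|_I}$.
   Context: A building set on a finite set $S\subset\mathbb N$ is a collection $\mathcal B$ of nonempty subsets of $S$ containing every singleton, such that $I,J\in\mathcal B$, $I\cap J\neq\emptyset$ imply $I\cup J\in\mathcal B$; its connected components are its inclusion-maximal elements; it is connected if $S\in\mathcal B$; $\mathcal B|_I=\{J\in\mathcal B:J\subseteq I\}$. For a connected building set $\mathcal B$ on $[n+1]$, the nested set complex $K_{\mathcal B}$ is the simplicial complex on vertex set $\mathcal B\setminus\{[n+1]\}$ whose simplices are the subsets $N\subseteq\mathcal B\setminus\{[n+1]\}$ such that (i) any $I,J\in N$ satisfy $I\subseteq J$, $J\subseteq I$ or $I\cap J=\emptyset$, and (ii) for any $r\ge2$ pairwise disjoint $I_1,\dots,I_r\in N$, $I_1\cup\dots\cup I_r\notin\mathcal B$. A simplicial complex is flag if every set of vertices that are pairwise joined by edges forms a simplex. For $I\subseteq[n+1]$ of even cardinality, $(K_{\mathcal B})_I$ is the full subcomplex of $K_{\mathcal B}$ induced on the vertices $J$ with $|J\cap I|$ odd, and $K^{\mathrm{odd}}_{\mathcal B|_I}$ is the full subcomplex of $K_{\mathcal B}$ induced on the vertices $J\in\mathcal B$ with $J\subseteq I$ and $|J|$ odd. *)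

From HB Require Import structures.
From mathcomp Require Import all_boot all_order all_algebra.
From mathcomp Require Import all_classical all_reals.
From mathcomp Require Import topology normedtype.
Import numFieldNormedType.Exports.
Set Implicit Arguments. Unset Strict Implicit. Unset Printing Implicit Defensive.
Import Order.TTheory GRing.Theory Num.Theory.
Local Open Scope ring_scope.

Definition building_set (T : finType) (B : {set {set T}}) : Prop :=
  [/\ finset.set0 \notin B,
      (forall x : T, [set x] \in B) &
      (forall I J, I \in B -> J \in B -> I :&: J != finset.set0 -> I :|: J \in B)].

Definition connected_bs (T : finType) (B : {set {set T}}) : Prop :=
  [set: T] \in B.

Definition nested (T : finType) (B : {set {set T}}) (N : {set {set T}}) : Prop :=
  [/\ N \subset B :\ [set: T],
      (forall I J, I \in N -> J \in N ->
         [|| I \subset J, J \subset I | [disjoint I & J]]) &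
      (forall M : {set {set T}}, M \subset N -> (2 <= #|M|)%N ->
         (forall I J, I \in M -> J \in M -> I != J -> [disjoint I & J]) ->
         \bigcup_(J in M) J \notin B)].

Definition flag (V : finType) (face : {set V} -> Prop) : Prop :=
  forall N : {set V},
    (forall u v, u \in N -> v \in N -> face [set u; v]) -> face N.

Definition full_sub (V : finType) (face : {set V} -> Prop) (W : {pred V})
  : {set V} -> Prop :=
  fun N => N \subset W /\ face N.

Definition KB_I (T : finType) (B : {set {set T}}) (I : {set T}) :=
  full_sub (nested B) [pred J : {set T} | odd #|J :&: I|].

Definition KB_odd (T : finType) (B : {set {set T}}) (I : {set T}) :=
  full_sub (nested B) [pred J : {set T} | [&& J \in B, J \subset I & odd #|J|]].

Local Open Scope classical_set_scope.

(* Geometric realization of a simplicial complex on a finite vertex type V,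
   as the set of barycentric-coordinate functions V -> R whose support is a
   face, inside the product space R^V. *)
Definition realization (R : realType) (V : finType) (face : {set V} -> Prop)
  : set {ptws V -> R} :=
  [set f | [/\ (forall v, 0 <= f v), \sum_(v : V) f v = 1 &
               face [set v | f v != 0]%SET]].

Definition homotopic_on (R : realType) (X Y : topologicalType)
  (A : set X) (B : set Y) (f g : X -> Y) : Prop :=
  exists H : X * R -> Y,
    [/\ {within A `*` [set t : R | 0 <= t <= 1], continuous H},
        (forall x t, A x -> 0 <= t <= 1 -> B (H (x, t))),
        (forall x, A x -> H (x, 0) = f x) &
        (forall x, A x -> H (x, 1) = g x)].

Definition homotopy_equivalent (R : realType) (X Y : topologicalType)
  (A : set X) (B : set Y) : Prop :=
  exists (f : X -> Y) (g : Y -> X),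
    [/\ {within A, continuous f}, f @` A `<=` B,
        {within B, continuous g}, g @` B `<=` A &
        homotopic_on R A A (g \o f) id /\ homotopic_on R B B (f \o g) id].

Arguments realization R {V} face.
Arguments homotopic_on R {X Y} A B f g.
Arguments homotopy_equivalent R {X Y} A B.

(* For a vertex J of (K_B)_I, the maximal members of B inside J :&: I partition
   it, so one of them, c(J), has odd size; c fixes the vertices of
   K^odd_{B|_I}, and its linear extension r retracts |(K_B)_I| onto
   |K^odd_{B|_I}|.  The homotopy between the identity and r slides the weight
   of each vertex v to c(v), smaller vertices first.  As K_B is flag, a set of
   vertices is a face as soon as each pair is nested, and a vertex v' and the
   image c(v) of another vertex v of a face are nested unless v' is a proper
   subset of v not contained in I; the ordering rules this out, since the proper
   subsets of v have finished moving before v starts. *)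

From HB Require Import structures.
From mathcomp Require Import all_boot all_order all_algebra.
From mathcomp Require Import all_classical all_reals.
From mathcomp Require Import topology normedtype.
From mathcomp Require Import lra.

Import numFieldNormedType.Exports.
Set Implicit Arguments. Unset Strict Implicit. Unset Printing Implicit Defensive.
Import Order.TTheory GRing.Theory Num.Theory.
From mathcomp Require Import fintype finset.

Section Continuity.
Variables (R : realType) (X : topologicalType).
Local Open Scope ring_scope.

Lemma continuous_ptws (V : finType) (h : X -> {ptws V -> R}) :
  (forall v, continuous (fun x => h x v)) -> continuous h.
Proof.
move=> hc x; apply/cvg_sup => v U /= [W [[W' oW' <-] Wx]] sWU.
by apply: (filterS sWU); apply: (hc v x); exact: open_nbhs_nbhs.
Qed.

Lemma continuous_sum (I : Type) (s : seq I) (F : I -> X -> R) :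
  (forall i, continuous (F i)) -> continuous (fun x => \sum_(i <- s) F i x).
Proof.
move=> Fc; elim: s => [|i s IHs] x.
  by under eq_fun do rewrite big_nil; exact: cvg_cst.
by under eq_fun do rewrite big_cons; apply: (@continuousD _ R^o); [exact: Fc|exact: IHs].
Qed.

End Continuity.

Section DeformationRetract.
Variables (R : realType) (X : topologicalType).
Local Open Scope classical_set_scope.

Lemma deformation_retract_homotopy_equivalent (A B : set X) (r : X -> X) :
  B `<=` A -> {within A, continuous r} -> r @` A `<=` B ->
  (forall x, B x -> r x = x) -> homotopic_on R A A r id ->
  homotopy_equivalent R A B.
Proof.
move=> BA rc rAB rB rid; exists r, id; split => //.
- by apply: continuous_subspaceT => x; exact: cvg_id.
- by move=> _ [x Bx <-]; exact: BA.
split=> //; exists (fun p : X * R => p.1); split => //.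
- by apply: continuous_subspaceT => p; exact: cvg_fst.
- by move=> x /= /rB.
Qed.

End DeformationRetract.

Section Push.
Variables (R : realType) (V : finType) (r : V -> V).
Local Open Scope ring_scope.
Implicit Types (x a : V -> R).

Lemma sumr_delta (F : V -> R) (v : V) : \sum_u F u * (u == v)%:R = F v.
Proof.
rewrite (bigD1 v) //= eqxx mulr1 big1 ?addr0 // => u uv.
by rewrite (negbTE uv) mulr0.
Qed.

Definition push a (x : {ptws V -> R}) : {ptws V -> R} :=
  fun u => \sum_v x v * (a v * (v == u)%:R + (1 - a v) * (r v == u)%:R).

Lemma push_ge0 a x : (forall v, 0 <= x v) -> (forall v, 0 <= a v <= 1) ->
  forall u, 0 <= push a x u.
Proof.
move=> x0 a01 u; apply: sumr_ge0 => v _; apply: mulr_ge0 => //.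
have /andP[a0 a1] := a01 v.
by apply: addr_ge0; apply: mulr_ge0; rewrite ?subr_ge0 ?ler0n.
Qed.

Lemma push_sum a x : \sum_u push a x u = \sum_v x v.
Proof.
have delta1 (w : V) : \sum_u (w == u)%:R = 1 :> R.
  by rewrite -[RHS](sumr_delta (fun=> 1) w); apply: eq_bigr => u _; rewrite mul1r eq_sym.
rewrite exchange_big; apply: eq_bigr => v _.
rewrite -mulr_sumr big_split /= -!mulr_sumr !delta1 !mulr1.
by rewrite addrC subrK mulr1.
Qed.

Lemma push_supportP a x u : push a x u != 0 ->
  exists2 v, x v != 0 & ((a v != 0) && (u == v)) || ((a v != 1) && (u == r v)).
Proof.
move=> pu; case: (pickP (fun v => (x v != 0) &&
   (((a v != 0) && (u == v)) || ((a v != 1) && (u == r v))))) =>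
   [v /andP[xv hv]|none]; first by exists v.
move: pu; rewrite /push big1 ?eqxx // => v _; move: (none v).
move/negbT; rewrite negb_and negbK negb_or !negb_and !negbK.
case/orP => [/eqP->|/andP[h1 h2]]; first by rewrite mul0r.
have -> : a v * (v == u)%:R = 0.
  by case/orP: h1 => [/eqP->|uv]; rewrite ?mul0r // eq_sym (negbTE uv) mulr0.
have -> : (1 - a v) * (r v == u)%:R = 0.
  by case/orP: h2 => [/eqP->|ruv]; rewrite ?subrr ?mul0r // eq_sym (negbTE ruv) mulr0.
by rewrite addr0 mulr0.
Qed.

Lemma push_id a x : (forall v, x v != 0 -> a v = 1 \/ r v = v) -> push a x = x.
Proof.
move=> h; apply/funext => u; rewrite /push -[RHS](sumr_delta x); apply: eq_bigr => v _.
have [->|/h [->|->]] := eqVneq (x v) 0; first by rewrite !mul0r.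
  by rewrite mul1r subrr mul0r addr0.
by rewrite -mulrDl addrC subrK mul1r.
Qed.

Lemma continuous_push (X : topologicalType) (a : X -> V -> R) (f : X -> {ptws V -> R}) :
  (forall v, continuous (a^~ v)) -> continuous f ->
  continuous (fun y => push (a y) (f y)).
Proof.
move=> ac fc; apply: continuous_ptws => u; apply: continuous_sum => v y.
have fvc : {for y, continuous (fun y => f y v)}.
  exact: (continuous_comp (fc y) (@proj_continuous V (fun=> R) v (f y))).
apply: (@cvgM R X (nbhs y)) => //.
apply: (@cvgD _ R^o); apply: (@cvgM R X (nbhs y)); try exact: cvg_cst.
  exact: ac.
by apply: (@cvgB _ R^o); [exact: cvg_cst | exact: ac].
Qed.

End Push.

Lemma meet_not_disjoint (T : finType) (A A' : {set T}) (x : T) :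
  x \in A -> x \in A' -> ~~ [disjoint A & A'].
Proof. by move=> xA xA'; apply/negP => /disjointFr /(_ xA); rewrite xA'. Qed.

Lemma odd_sum_exists (I : finType) (P : {pred I}) (F : I -> nat) :
  odd (\sum_(i in P) F i) -> exists2 i, i \in P & odd (F i).
Proof.
have [/exists_inP //|/exists_inPn even_F] := boolP [exists i in P, odd (F i)].
suff -> : odd (\sum_(i in P) F i) = false by [].
by apply/negbTE; elim/big_ind: _ => // m k; rewrite oddD => /negbTE-> /negbTE->.
Qed.

Section BuildingSet.
Variables (T : finType) (B : {set {set T}}).
Hypothesis bsB : building_set B.

Lemma building_set_neq0 (E : {set T}) : E \in B -> E != set0.
Proof. by case: bsB => B0 _ _ EB; apply: contraNneq B0 => <-. Qed.

Lemma building_set1 (x : T) : [set x] \in B.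
Proof. by case: bsB. Qed.

Lemma building_setU (X Y : {set T}) :
  X \in B -> Y \in B -> ~~ [disjoint X & Y] -> X :|: Y \in B.
Proof. by case: bsB => _ _ BU XB YB; rewrite -setI_eq0; exact: BU. Qed.

Definition maximal_in (A D : {set T}) :=
  forall E, E \in B -> E \subset A -> ~~ [disjoint E & D] -> E \subset D.

Definition component (A : {set T}) (x : T) : {set T} :=
  [arg max_(D > [set x] | (D \in B) && (x \in D) && (D \subset A)) #|D|].

Lemma componentP (A : {set T}) (x : T) : x \in A ->
  [/\ component A x \in B, x \in component A x, component A x \subset A
    & maximal_in A (component A x)].
Proof.
move=> xA; rewrite /component; case: arg_maxnP.
  by rewrite building_set1 set11 sub1set xA.
move=> D /andP[/andP[DB xD] DA] Dmax; split=> // E EB EA ED.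
have EDB : E :|: D \in B by exact: building_setU.
have : #|E :|: D| <= #|D|.
  by apply: Dmax; rewrite EDB (subsetP (subsetUr E D)) // subUset EA DA.
move=> le; have /eqP -> : D == E :|: D by rewrite eqEcard subsetUr le.
exact: subsetUl.
Qed.

Lemma component_eq (A : {set T}) (x y : T) :
  x \in A -> y \in component A x -> component A y = component A x.
Proof.
move=> xA ycx; have [cxB xcx cxA cxM] := componentP xA.
have [cyB ycy cyA cyM] := componentP (subsetP cxA y ycx).
apply/eqP; rewrite eqEsubset; apply/andP; split.
  by apply: cxM => //; exact: meet_not_disjoint ycy ycx.
by apply: cyM => //; exact: meet_not_disjoint ycx ycy.
Qed.

Lemma partition_components (A : {set T}) :
  partition [set component A x | x in A] A.
Proof.
apply/and3P; split.
- apply/eqP/setP => y; apply/bigcupP/idP => [[_ /imsetP[x xA ->]]|yA].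
    by have [_ _ /subsetP cA _] := componentP xA; exact: cA.
  by exists (component A y); [exact: imset_f | have [] := componentP yA].
- apply/trivIsetP => _ _ /imsetP[x1 x1A ->] /imsetP[x2 x2A ->].
  move=> neq; rewrite -setI_eq0; apply: contraNT neq => /set0Pn[z].
  rewrite inE => /andP[z1 z2].
  by rewrite -(component_eq x1A z1) -(component_eq x2A z2).
- apply/imsetP => -[x xA] c0.
  by have [_ + _ _] := componentP xA; rewrite -c0 inE.
Qed.

Lemma exists_odd_component (A : {set T}) :
  odd #|A| -> exists2 x, x \in A & odd #|component A x|.
Proof.
rewrite (card_partition (partition_components A)).
by move=> /odd_sum_exists[_ /imsetP[x xA ->] oD]; exists x.
Qed.

Definition compatible (u v : {set T}) :=
  [|| u \subset v, v \subset u | [disjoint u & v] && (u :|: v \notin B)].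

Lemma compatible_sym (u v : {set T}) : compatible u v = compatible v u.
Proof.
by rewrite /compatible disjoint_sym setUC; case: (u \subset v); case: (v \subset u).
Qed.

Lemma maximal_compatible (A D E : {set T}) : D \in B -> maximal_in A D ->
  E \in B -> E \subset A -> D \subset A -> compatible E D.
Proof.
move=> DB DM EB EA DA; rewrite /compatible.
have [ED|nED] := boolP [disjoint E & D]; last by rewrite DM.
have [EDB|] := boolP (E :|: D \in B); last by rewrite !orbT.
have /set0Pn[y yD] := building_set_neq0 DB.
have : E :|: D \subset D.
  apply: DM => //; first by rewrite subUset EA.
  by apply: (meet_not_disjoint _ yD); rewrite inE yD orbT.
by rewrite subUset => /andP[->].
Qed.

Lemma nested_subset (N N' : {set {set T}}) :
  nested B N -> N' \subset N -> nested B N'.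
Proof.
case=> NB Nlaminar Nunion N'N; split.
- exact: subset_trans N'N NB.
- by move=> X Y XN' YN'; apply: Nlaminar; exact: (subsetP N'N).
- by move=> M MN'; apply: Nunion; exact: subset_trans MN' N'N.
Qed.

Lemma nested_vertex (N : {set {set T}}) v :
  nested B N -> v \in N -> v \in B /\ v != setT.
Proof. by case=> NB _ _ /(subsetP NB); rewrite in_setD1 => /andP[-> ->]. Qed.

Lemma nested2_compatible (u v : {set T}) : nested B [set u; v] -> compatible u v.
Proof.
case=> _ laminar union; rewrite /compatible.
case/or3P: (laminar u v (set21 u v) (set22 u v)) => [-> // | -> | uv].
  by rewrite orbT.
have [<-|neq] := eqVneq u v; first by rewrite subxx.
rewrite uv /=; do 2!(apply/orP; right).
have := union [set u; v] (subxx _); rewrite bigcup_setU !big_set1 cards2 neq; apply=> //.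
by move=> X Y /set2P[->|->] /set2P[->|->]; rewrite ?eqxx // disjoint_sym.
Qed.

Lemma compatible_nested2 (u v : {set T}) : u \in B -> v \in B ->
  u != setT -> v != setT -> compatible u v -> nested B [set u; v].
Proof.
move=> uB vB uT vT uv; split.
- by apply/subsetP => w /set2P[->|->]; rewrite in_setD1 ?uB ?vB ?uT ?vT.
- move=> X Y /set2P[->|->] /set2P[->|->]; rewrite ?subxx //;
    by case/or3P: uv => [->|->|/andP[dis _]];
       rewrite ?orbT // ?(disjoint_sym v u) dis ?orbT.
- move=> M Muv M2 Mdis.
  have [eM neq] : M = [set u; v] /\ u != v.
    have := subset_leq_card Muv; rewrite cards2.
    have [<-|neq] := eqVneq u v => /= M_le; first by have := leq_trans M2 M_le.
    by split=> //; apply/eqP; rewrite eqEcard Muv cards2 neq.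
  have dis : [disjoint u & v] by apply: Mdis; rewrite ?eM ?set21 ?set22.
  rewrite eM bigcup_setU !big_set1.
  have /set0Pn[y yu] := building_set_neq0 uB; have /set0Pn[y' yv] := building_set_neq0 vB.
  case/or3P: uv => [/subsetP uv | /subsetP vu | /andP[_ //]].
    by have := meet_not_disjoint yu (uv y yu); rewrite dis.
  by have := meet_not_disjoint (vu y' yv) yv; rewrite dis.
Qed.

Section OddComponent.
Variable I : {set T}.

(* For [odd #|J :&: I|] the else branch is never taken. *)
Definition odd_component (J : {set T}) : {set T} :=
  if [pick x in J :&: I | odd #|component (J :&: I) x|] is Some x
  then component (J :&: I) x else J.

Lemma odd_componentP (J : {set T}) : odd #|J :&: I| ->
  [/\ odd_component J \in B, odd_component J \subset J :&: I,
      odd #|odd_component J| & maximal_in (J :&: I) (odd_component J)].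
Proof.
move=> oJ; rewrite /odd_component; case: pickP => [x /andP[xJ ox] | none].
  by have [] := componentP xJ.
have [x xJ ox] := exists_odd_component oJ.
by have := none x; rewrite xJ ox.
Qed.

Lemma odd_component_id (J : {set T}) :
  J \in B -> J \subset I -> odd_component J = J.
Proof.
move=> JB JI; rewrite /odd_component (setIidPl JI).
case: pickP => [x /andP[xJ _] | //]; have [_ xc cJ cM] := componentP xJ.
by apply/eqP; rewrite eqEsubset cJ cM //; exact: meet_not_disjoint xJ xc.
Qed.

Lemma compatible_odd_component2 (J J' : {set T}) :
  J \in B -> J' \in B -> odd #|J :&: I| -> odd #|J' :&: I| ->
  compatible J J' -> compatible (odd_component J) (odd_component J').
Proof.
move=> JB J'B oJ oJ'; set c := odd_component J; set c' := odd_component J'.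
have [cB cJI _ cM] := odd_componentP oJ; have [c'B c'J'I _ c'M] := odd_componentP oJ'.
have cJ : c \subset J := subset_trans cJI (subsetIl J I).
have c'J' : c' \subset J' := subset_trans c'J'I (subsetIl J' I).
case/or3P => [JJ' | J'J | /andP[dis JJ'B]].
- by apply: (maximal_compatible c'B c'M cB) => //; exact: subset_trans cJI (setSI I JJ').
- rewrite compatible_sym; apply: (maximal_compatible cB cM c'B) => //.
  exact: subset_trans c'J'I (setSI I J'J).
- rewrite /compatible (disjointW cJ c'J' dis) /=.
  do 2!(apply/orP; right); apply/negP => cc'B.
  have /set0Pn[y yc] := building_set_neq0 cB.
  have /set0Pn[y' yc'] := building_set_neq0 c'B.
  have ccJB : c :|: c' :|: J \in B.
    by apply: building_setU => //; apply: (meet_not_disjoint (x := y));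
       rewrite ?inE ?yc ?(subsetP cJ).
  have : c :|: c' :|: J :|: J' \in B.
    by apply: building_setU => //; apply: (meet_not_disjoint (x := y'));
       rewrite ?inE ?yc' ?(subsetP c'J') ?orbT.
  by rewrite -setUA (setUidPr (setUSS cJ c'J')) (negbTE JJ'B).
Qed.

Lemma compatible_odd_componentl (J J' : {set T}) :
  J \in B -> J' \in B -> odd #|J :&: I| -> (J' \subset I) || ~~ (J' \proper J) ->
  compatible J J' -> compatible (odd_component J) J'.
Proof.
move=> JB J'B oJ J'IJ; set c := odd_component J.
have [cB cJI _ cM] := odd_componentP oJ.
have cJ : c \subset J := subset_trans cJI (subsetIl J I).
case/or3P => [JJ' | J'J | /andP[dis JJ'B]].
- by rewrite /compatible (subset_trans cJ JJ').
- case/orP: J'IJ => [J'I | ].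
    rewrite compatible_sym; apply: (maximal_compatible cB cM J'B) => //.
    by rewrite subsetI J'J J'I.
  by rewrite properE J'J negbK => JJ'; rewrite /compatible (subset_trans cJ JJ').
- rewrite /compatible (disjointWl cJ dis) /=.
  do 2!(apply/orP; right); apply/negP => cJ'B.
  have /set0Pn[y yc] := building_set_neq0 cB.
  have : c :|: J' :|: J \in B.
    by apply: building_setU => //; apply: (meet_not_disjoint (x := y));
       rewrite ?inE ?yc ?(subsetP cJ).
  by rewrite -setUA setUC -setUA (setUidPl cJ) setUC (negbTE JJ'B).
Qed.

Lemma odd_component_vertex (v : {set T}) :
  v \in B -> v != setT -> odd #|v :&: I| ->
  [/\ odd_component v \in B, odd_component v != setT,
      odd_component v \subset I & odd #|odd_component v :&: I|].
Proof.
move=> vB vT ov; have [cB cvI oc _] := odd_componentP ov.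
have cI : odd_component v \subset I := subset_trans cvI (subsetIr v I).
split=> //; last by rewrite (setIidPl cI).
apply: contraNneq vT => cT; rewrite eqEsubset subsetT -cT.
exact: subset_trans cvI (subsetIl v I).
Qed.

Lemma KB_I_odd_component_face (sigma S : {set {set T}}) (stay move : pred {set T}) :
  flag (nested B) -> KB_I B I sigma ->
  (forall v v', v \in sigma -> v' \in sigma -> move v -> stay v' -> ~~ (v' \proper v)) ->
  (forall u, u \in S -> exists2 v, v \in sigma &
     (stay v && (u == v)) || (move v && (u == odd_component v))) ->
  KB_I B I S.
Proof.
move=> flB [/subsetP sigma_odd sigmaN] gap S_sigma.
have vertexP v : v \in sigma ->
    [/\ v \in B, v != setT, odd #|v :&: I| & odd #|odd_component v :&: I|].
  move=> vs; have [vB vT] := nested_vertex sigmaN vs.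
  have ov : odd #|v :&: I| by have := sigma_odd v vs; rewrite inE.
  by have [_ _ _ ->] := odd_component_vertex vB vT ov.
split.
  apply/subsetP => u /S_sigma[v /vertexP[_ _ ov oc]].
  by case/orP => /andP[_ /eqP->]; rewrite inE.
apply: flB => u1 u2 /S_sigma[v1 v1s h1] /S_sigma[v2 v2s h2].
have [v1B v1T ov1 _] := vertexP v1 v1s; have [v2B v2T ov2 _] := vertexP v2 v2s.
have [c1B c1T _ _] := odd_component_vertex v1B v1T ov1.
have [c2B c2T _ _] := odd_component_vertex v2B v2T ov2.
have v12 : nested B [set v1; v2].
  by apply: nested_subset sigmaN _; apply/subsetP => w /set2P[->|->].
have c12 := nested2_compatible v12.
case/orP: h1 => /andP[k1 /eqP->]; case/orP: h2 => /andP[k2 /eqP->] //.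
- apply: compatible_nested2 => //; rewrite compatible_sym.
  by apply: compatible_odd_componentl; rewrite ?(gap v2 v1) ?orbT // compatible_sym.
- apply: compatible_nested2 => //.
  by apply: compatible_odd_componentl; rewrite ?(gap v1 v2) ?orbT.
- by apply: compatible_nested2 => //; exact: compatible_odd_component2.
Qed.

End OddComponent.

End BuildingSet.

Section Stagger.
Variable R : realType.
Local Open Scope ring_scope.

Definition clamp01 (a : R) : R := Num.min 1 (Num.max 0 a).

Lemma continuous_clamp01 (X : topologicalType) (f : X -> R) :
  continuous f -> continuous (fun x => clamp01 (f x)).
Proof.
move=> fc x; apply: (@continuous_min R X (fun=> 1) (fun x => Num.max 0 (f x))).
  exact: cvg_cst.
by apply: (@continuous_max R X (fun=> 0) f); [exact: cvg_cst | exact: fc].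
Qed.

Lemma clamp01_ge0 (a : R) : 0 <= clamp01 a.
Proof. by rewrite le_min ler01 le_max lexx. Qed.

Lemma clamp01_le1 (a : R) : clamp01 a <= 1.
Proof. by rewrite ge_min lexx. Qed.

Lemma clamp01_eq0 (a : R) : a <= 0 -> clamp01 a = 0.
Proof. by move=> a0; rewrite /clamp01 (max_idPl a0); apply/min_idPr; rewrite ler01. Qed.

Lemma clamp01_eq1 (a : R) : 1 <= a -> clamp01 a = 1.
Proof.
move=> a1; rewrite /clamp01 (max_idPr (le_trans ler01 a1)); exact/min_idPl.
Qed.

(* The weight a vertex of size [s] keeps at time [t]: it drops from 1 to 0 as [t]
   decreases through [[(N - s) / (N + 1), (N - s + 1) / (N + 1)]], so going from
   the identity ([t = 1]) to the retraction ([t = 0]) smaller vertices move first. *)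
Definition stagger (N s : nat) (t : R) : R :=
  clamp01 (N.+1%:R * t - N%:R + s%:R).

Lemma stagger_01 N s t : 0 <= stagger N s t <= 1.
Proof. by rewrite clamp01_ge0 clamp01_le1. Qed.

Lemma stagger0 N s : (s <= N)%N -> stagger N s 0 = 0.
Proof.
move=> sN; apply: clamp01_eq0; rewrite mulr0 add0r.
have : (s%:R : R) <= N%:R by rewrite ler_nat.
lra.
Qed.

Lemma stagger1 N s : stagger N s 1 = 1.
Proof.
apply: clamp01_eq1; rewrite mulr1 -natr1.
have : 0 <= (s%:R : R) by [].
lra.
Qed.

Lemma stagger_gap N s s' t : (s' < s)%N -> stagger N s' t != 0 -> stagger N s t = 1.
Proof.
move=> ss' st; apply: clamp01_eq1.
have : 0 < N.+1%:R * t - N%:R + s'%:R.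
  by rewrite ltNge; apply: contra st => /clamp01_eq0/eqP.
have : (s'%:R : R) + 1 <= s%:R by rewrite natr1 ler_nat.
lra.
Qed.

Lemma continuous_stagger N s : continuous (stagger N s).
Proof.
apply: continuous_clamp01 => t.
apply: (@cvgD _ R^o); last exact: cvg_cst.
apply: (@cvgB _ R^o); last exact: cvg_cst.
by apply: (@cvgM R R (nbhs t)); [exact: cvg_cst | exact: cvg_id].
Qed.

End Stagger.

Section Retraction.
Variables (R : realType) (T : finType) (B : {set {set T}}) (I : {set T}).
Hypotheses (bsB : building_set B) (flB : flag (nested B)).
Local Open Scope ring_scope.
Local Notation KI := (realization R (KB_I B I)).
Local Notation Kodd := (realization R (KB_odd B I)).
Local Notation c := (odd_component B I).

Lemma realization_KB_odd_sub : (Kodd `<=` KI)%classic.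
Proof.
move=> x [x0 x1 [/subsetP xodd xN]]; split=> //; split=> //.
apply/subsetP => v /xodd; rewrite !inE => /and3P[_ vI ov].
by rewrite (setIidPl vI).
Qed.

Lemma push_KB_I a x : KI x -> (forall v, 0 <= a v <= 1) ->
  (forall v v', x v != 0 -> x v' != 0 -> a v != 1 -> a v' != 0 -> ~~ (v' \proper v)) ->
  KI (push c a x).
Proof.
move=> [x0 x1 xK] a01 gap; split; first exact: push_ge0.
  by rewrite push_sum.
apply: (KB_I_odd_component_face bsB (sigma := [set v | x v != 0])
          (stay := fun v => a v != 0) (move := fun v => a v != 1)) => //.
  by move=> v v'; rewrite !inE; exact: gap.
by move=> u; rewrite inE => /push_supportP[v xv h]; exists v; rewrite ?inE.
Qed.

Lemma push0_KB_odd x : KI x -> Kodd (push c (fun=> 0) x).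
Proof.
move=> xK; have [p0 p1 [_ pN]] : KI (push c (fun=> 0) x).
  by apply: push_KB_I => // [v|v v' _ _ _]; rewrite ?lexx ?ler01 ?eqxx.
case: xK => _ _ [/subsetP xodd xN]; split=> //; split=> //.
apply/subsetP => u; rewrite inE => /push_supportP[v xv].
rewrite eqxx /= => /andP[_ /eqP->].
have vx : v \in [set v | x v != 0] by rewrite inE.
have [vB vT] := nested_vertex xN vx; have := xodd v vx; rewrite inE => ov.
have [cB _ cI _] := odd_component_vertex bsB vB vT ov.
by have [_ _ oc _] := odd_componentP bsB ov; rewrite inE cB cI.
Qed.

Lemma push0_KB_odd_id x : Kodd x -> push c (fun=> 0) x = x.
Proof.
case=> _ _ [/subsetP xodd _]; apply: push_id => v xv; right.
have := xodd v; rewrite !inE => /(_ xv) /and3P[vB vI _].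
exact: odd_component_id.
Qed.

Lemma homotopic_push0_id : homotopic_on R KI KI (push c (fun=> 0)) id.
Proof.
exists (fun p => push c (fun v => stagger #|T| #|v| p.2) p.1); split.
- apply: continuous_subspaceT; apply: continuous_push => [v p|p]; last exact: cvg_fst.
  by apply: continuous_comp; [exact: cvg_snd | exact: continuous_stagger].
- move=> x t xK _; apply: push_KB_I => // [v|v v' _ _ moving staying].
    exact: stagger_01.
  apply/negP => /proper_card lt; move: moving.
  by rewrite (stagger_gap lt staying) eqxx.
- move=> x _ /=; congr push; apply/funext => v.
  by apply: stagger0; exact: max_card.
- by move=> x _ /=; apply: push_id => v _; left; exact: stagger1.
Qed.

End Retraction.

Theorem lemma5p2 (R : realType) (n : nat) (B : {set {set 'I_n.+1}}) :
  building_set B -> connected_bs B -> flag (nested B) ->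
  forall I : {set 'I_n.+1}, ~~ odd #|I| ->
  homotopy_equivalent R (realization R (KB_I B I))
                        (realization R (KB_odd B I)).
Proof.
move=> bsB _ flB I _.
apply: (deformation_retract_homotopy_equivalent
          (r := push (odd_component B I) (fun=> 0%R))).
- exact: realization_KB_odd_sub.
- apply: continuous_subspaceT; apply: continuous_push => [v|x].
    exact: cst_continuous.
  exact: cvg_id.
- by move=> _ [x xK <-]; exact: push0_KB_odd.
- exact: push0_KB_odd_id.
- exact: homotopic_push0_id.
Qed.
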